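(* Let $(V_o,w_o,\mu_o)$ be a simple weighted graph with adapted weight $\sigma_o$ and adapted path metric $d_{\sigma_o}$, and fix $\bar x\in V_o$. Assume $C_o:=\inf_{x\in V_o}\mu_o(x)>0$ and that every ball $B_{d_{\sigma_o}}(\bar x,r)$ has finite $\mu_o$-measure. Set \[f(r)=\log\mu_o\big(B_{d_{\sigma_o}}(\bar x,r)\big)-\log C_o,\qquad R_n=2^{n+4},\qquad \sigma_n=\frac{1}{f(R_n)+2+\log\log R_n}\qquad(n\in\mathbb N).\] Let $\mathfrak n:E_o\to\mathbb N_+$ be symmetric with $\mathfrak n\ge2$, such that for every $n\in\mathbb N$ and every $e=(x,y)\in E_o$ with $d_{\sigma_o}(x,\bar x)\vee d_{\sigma_o}(y,\bar x)\ge2^{n+2}-1$, \[\mathfrak n(e)\ge f(R_n)+2+\log\log R_n.\] Let $(V,w,\mu)$ be the modified graph with weight $\mathfrak n$, with adapted weight $\sigma$ and path metric $d_\sigma$. Then for every $n\in\mathbb N$, every $e=(x,y)\in E_o^+$ and every $0\le k\le\mathfrak n(e)-1$: if $d_\sigma(x^e_k,\bar x)\vee d_\sigma(x^e_{k+1},\bar x)\ge2^{n+2}$, then $\sigma(x^e_k,x^e_{k+1})\le\sigma_n$.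
   Context: **Weighted graphs.** A simple weighted graph $(V,w,\mu)$ consists of a countably infinite set $V$, a symmetric function $w:V\times V\to[0,\infty)$ and a function $\mu:V\to(0,\infty)$. The graph with edges $\{x\sim y:w(x,y)>0\}$ is assumed to be locally finite, connected, and without loops or multiple edges. **Adapted weights and metrics.** An adapted weight is a symmetric $\sigma:E\to(0,1]$ with $\frac1{\mu(x)}\sum_y w(x,y)\sigma(x,y)^2\le1$ for all $x$. The adapted path metric $d_\sigma(x,y)$ is the infimum of $\sum_i\sigma(x_i,x_{i+1})$ over paths $x=x_0\sim\cdots\sim x_n=y$. Closed balls are $B_d(x,r)=\{y:d(x,y)\le r\}$, and $a\vee b=\max(a,b)$. **Modified graph.** Fix an orientation $E_o^+$ of $E_o$. For $e=(x,y)\in E_o^+$, add distinct new vertices $x^e_1,\dots,x^e_{\mathfrak n(e)-1}$, set $x_0^e=x$, $x^e_{\mathfrak n(e)}=y$, and replace the edge $x\sim y$ by the path $x^e_0\sim\cdots\sim x^e_{\mathfrak n(e)}$. Weights and measure: - $w(x^e_i,x^e_{i+1})=\mathfrak n(e)w_o(e)$, symmetric, and $w=0$ otherwise; - $\mu=\mu_o$ on $V_o$, and $\mu(x^e_i)=2w_o(e)\sigma_o(e)^2/\mathfrak n(e)$; - $\sigma(x^e_i,x^e_{i+1})=\sigma_o(e)/\mathfrak n(e)$. *)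

From HB Require Import structures.
From mathcomp Require Import all_boot all_order all_algebra.
From mathcomp Require Import all_classical all_reals all_analysis.
Set Implicit Arguments. Unset Strict Implicit. Unset Printing Implicit Defensive.
Import Order.TTheory GRing.Theory Num.Theory.
Local Open Scope classical_set_scope.
Local Open Scope ring_scope.

Definition adj (R : realType) (T : Type) (w : T -> T -> R) : rel T :=
  fun a b => 0 < w a b.

(* sigma-length of the path x = x_0 ~ x_1 ~ ... ~ x_n, p = [:: x_1; ...; x_n] *)
Definition walk_len (R : realType) (T : Type) (s : T -> T -> R) (x : T) (p : seq T) : R :=
  \sum_(ab <- zip (x :: p) p) s ab.1 ab.2.

Definition path_metric (R : realType) (T : Type) (w s : T -> T -> R) (x y : T) : R :=
  inf [set l | exists p : seq T,
         [/\ path (adj w) x p, last x p = y & l = walk_len s x p]].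

Definition simple_weighted_graph (R : realType) (V : countType)
    (w : V -> V -> R) (mu : V -> R) : Prop :=
  infinite_set [set: V] /\
  (forall x y, w x y = w y x) /\ (forall x y, 0 <= w x y) /\
  (forall x, w x x = 0) /\ (forall x, 0 < mu x) /\
  (forall x, finite_set [set y | 0 < w x y]) /\
  (forall x y, exists p : seq V, path (adj w) x p /\ last x p = y).

Definition adapted_weight (R : realType) (V : choiceType)
    (w : V -> V -> R) (mu : V -> R) (s : V -> V -> R) : Prop :=
  (forall x y, 0 < w x y -> s x y = s y x) /\
  (forall x y, 0 < w x y -> 0 < s x y <= 1) /\
  (forall x, (mu x)^-1 * (\sum_(y \in [set y | 0 < w x y]) (w x y * s x y ^+ 2)) <= 1).

(* ori is an orientation E_o^+ of the edge set: exactly one of (x,y), (y,x) *)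
Definition orientation (R : realType) (V : Type) (w : V -> V -> R) (ori : rel V) : Prop :=
  forall x y, (ori x y -> 0 < w x y) /\ (0 < w x y -> ori x y != ori y x).

Definition new_pred (V : Type) (ori : rel V) (nn : V -> V -> nat) : pred (V * V * nat) :=
  fun t => ori t.1.1 t.1.2 && (0 < t.2 < nn t.1.1 t.1.2)%N.

(* new vertices x^e_i, e = (x,y) in E_o^+, 1 <= i <= nn(e) - 1 *)
Definition new_vertex (V : choiceType) (ori : rel V) (nn : V -> V -> nat) :=
  {t : V * V * nat | new_pred ori nn t}.

Definition mvertex (V : choiceType) (ori : rel V) (nn : V -> V -> nat) :=
  (V + new_vertex ori nn)%type.

(* x^e_i for e = (x,y) in E_o^+ and 0 <= i <= nn(e); x^e_0 = x, x^e_{nn(e)} = y *)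
Definition xe (V : choiceType) (ori : rel V) (nn : V -> V -> nat)
    (x y : V) (i : nat) : mvertex ori nn :=
  match @insub _ (new_pred ori nn) (new_vertex ori nn) (x, y, i) with
  | Some v => inr v
  | None => if i == 0%N then inl x else inl y
  end.

(* mlink a b = Some (x,y,i) iff {a,b} = {x^e_i, x^e_{i+1}} with e = (x,y) in E_o^+,
   i.e. a ~ b in the modified graph; None otherwise *)
Definition mlink (V : choiceType) (ori : rel V) (nn : V -> V -> nat)
    (a b : mvertex ori nn) : option (V * V * nat) :=
  match a, b with
  | inr u, inr v =>
      let: (x, y, i) := val u in let: (x', y', j) := val v in
      if (x == x') && (y == y') then
        (if j == i.+1 then Some (x, y, i)
         else if i == j.+1 then Some (x, y, j) else None)
      else None
  | inr u, inl z =>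
      let: (x, y, i) := val u in
      if (i == 1%N) && (z == x) then Some (x, y, 0%N)
      else if (i.+1 == nn x y) && (z == y) then Some (x, y, i) else None
  | inl z, inr u =>
      let: (x, y, i) := val u in
      if (i == 1%N) && (z == x) then Some (x, y, 0%N)
      else if (i.+1 == nn x y) && (z == y) then Some (x, y, i) else None
  | inl z, inl z' =>
      if ori z z' && (nn z z' == 1%N) then Some (z, z', 0%N)
      else if ori z' z && (nn z' z == 1%N) then Some (z', z, 0%N) else None
  end.

Definition mw (R : realType) (V : choiceType) (ori : rel V) (nn : V -> V -> nat)
    (w : V -> V -> R) (a b : mvertex ori nn) : R :=
  match mlink a b with
  | Some (x, y, _) => (nn x y)%:R * w x y
  | None => 0
  end.

Definition mmu (R : realType) (V : choiceType) (ori : rel V) (nn : V -> V -> nat)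
    (w : V -> V -> R) (mu : V -> R) (s : V -> V -> R) (a : mvertex ori nn) : R :=
  match a with
  | inl x => mu x
  | inr u => let: (x, y, _) := val u in 2 * w x y * s x y ^+ 2 / (nn x y)%:R
  end.

(* sigma(x^e_i, x^e_{i+1}) = sigma_o(e) / nn(e) (value off edges irrelevant) *)
Definition msigma (R : realType) (V : choiceType) (ori : rel V) (nn : V -> V -> nat)
    (s : V -> V -> R) (a b : mvertex ori nn) : R :=
  match mlink a b with
  | Some (x, y, _) => s x y / (nn x y)%:R
  | None => 0
  end.

Definition Cinf (R : realType) (V : Type) (mu : V -> R) : R := inf (range mu).

Definition ball_measure (R : realType) (V : choiceType) (w s : V -> V -> R)
    (mu : V -> R) (xbar : V) (r : R) : \bar R :=
  \esum_(y in [set y | (path_metric w s xbar y <= r)%R]) (mu y)%:E.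

Definition fball (R : realType) (V : choiceType) (w s : V -> V -> R)
    (mu : V -> R) (xbar : V) (r : R) : R :=
  ln (fine (ball_measure w s mu xbar r)) - ln (Cinf mu).

Definition Rn (R : realType) (n : nat) : R := 2 ^+ (n + 4).

Definition thr (R : realType) (V : choiceType) (w s : V -> V -> R)
    (mu : V -> R) (xbar : V) (n : nat) : R :=
  fball w s mu xbar (Rn R n) + 2 + ln (ln (Rn R n)).

Definition sigma_n (R : realType) (V : choiceType) (w s : V -> V -> R)
    (mu : V -> R) (xbar : V) (n : nat) : R :=
  1 / thr w s mu xbar n.

From HB Require Import structures.
From mathcomp Require Import all_boot all_order all_algebra.
From mathcomp Require Import all_classical all_reals all_analysis.
From mathcomp Require Import ring lra.
Import Order.TTheory GRing.Theory Num.Theory.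
Set Implicit Arguments. Unset Strict Implicit. Unset Printing Implicit Defensive.
Local Open Scope classical_set_scope.
Local Open Scope ring_scope.

(* The subdivided edge e = (x, y) consists of n(e) pieces of sigma-length
   sigma_o(e) / n(e), so every x^e_j lies within sigma_o(e) <= 1 of x, and
   lifting paths of the original graph gives d_sigma(x, z) <= d_sigma_o(x, z)
   on V_o.  Hence the hypothesis on x^e_k forces d_sigma_o(x, xbar) >= 2^(n+2) - 1,
   so n(e) >= f(R_n) + 2 + log log R_n > 0, the positivity coming from xbar in
   B(xbar, R_n) and log R_n >= 1; and sigma(x^e_k, x^e_(k+1)) = sigma_o(e) / n(e)
   <= 1 / n(e) <= sigma_n. *)

Section Walks.
Variables (R : realType) (T : Type) (s : T -> T -> R).

Lemma walk_len_nil x : walk_len s x [::] = 0.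
Proof. by rewrite /walk_len big_nil. Qed.

Lemma walk_len_cons x y p : walk_len s x (y :: p) = s x y + walk_len s y p.
Proof. by rewrite /walk_len /= big_cons. Qed.

Lemma walk_len_cat x p q :
  walk_len s x (p ++ q) = walk_len s x p + walk_len s (last x p) q.
Proof.
elim: p x => [|y p IH] x /=; first by rewrite walk_len_nil add0r.
by rewrite !walk_len_cons IH addrA.
Qed.

Variables (e : rel T) (c : R).

Lemma chain_walk_up (f : nat -> T) N :
  (forall i, (i < N)%N -> e (f i) (f i.+1) /\ s (f i) (f i.+1) = c) ->
  exists p, [/\ path e (f 0%N) p, last (f 0%N) p = f N & walk_len s (f 0%N) p = N%:R * c].
Proof.
elim: N f => [|N IH] g hg; first by exists [::]; rewrite walk_len_nil mul0r.
have [p [hp hl hlen]] := IH (g \o succn) (fun i hi => hg i.+1 hi).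
have [e0 s0] := hg 0%N isT.
exists (g 1%N :: p); rewrite /= e0 walk_len_cons hlen s0.
by split; [exact: hp | exact: hl | rewrite mulrSr mulrDl mul1r addrC].
Qed.

Lemma chain_walk_down (f : nat -> T) N :
  (forall i, (i < N)%N -> e (f i.+1) (f i) /\ s (f i.+1) (f i) = c) ->
  exists p, [/\ path e (f N) p, last (f N) p = f 0%N & walk_len s (f N) p = N%:R * c].
Proof.
move=> hf; have [|p] := @chain_walk_up (fun i => f (N - i)%N) N.
  move=> i hi; rewrite -(subnSK hi); apply: hf.
  by rewrite ltn_subrL (leq_ltn_trans (leq0n i) hi).
by rewrite subn0 subnn; exists p.
Qed.

End Walks.

Section PathMetric.
Variables (R : realType) (T : Type) (w s : T -> T -> R).
Hypothesis s_ge0 : forall a b, adj w a b -> 0 <= s a b.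

Lemma walk_len_ge0 x p : path (adj w) x p -> 0 <= walk_len s x p.
Proof.
elim: p x => [|y p IH] x /=; first by rewrite walk_len_nil.
by case/andP=> hxy hp; rewrite walk_len_cons addr_ge0 ?s_ge0 ?IH.
Qed.

Lemma path_metric_le_walk x p :
  path (adj w) x p -> path_metric w s x (last x p) <= walk_len s x p.
Proof.
move=> hp; apply: ge_inf; last by exists p.
by exists 0 => _ [q [hq _ ->]]; exact: walk_len_ge0.
Qed.

Lemma path_metric_le_add x p z :
  (exists q, path (adj w) (last x p) q /\ last (last x p) q = z) ->
  path (adj w) x p ->
  path_metric w s x z <= walk_len s x p + path_metric w s (last x p) z.
Proof.
move=> [q0 [hq0 hl0]] hp; rewrite -lerBlDl; apply: lb_le_inf.
  by exists (walk_len s (last x p) q0), q0.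
move=> _ [q [hq <- ->]]; rewrite lerBlDl -walk_len_cat -last_cat.
by apply: path_metric_le_walk; rewrite cat_path hp.
Qed.

End PathMetric.

Lemma path_metric_le_lift (R : realType) (T T' : Type) (w s : T -> T -> R)
    (w' s' : T' -> T' -> R) (f : T -> T') x y :
  (forall a b, adj w' a b -> 0 <= s' a b) ->
  (forall p, path (adj w) x p -> exists q, [/\ path (adj w') (f x) q,
     last (f x) q = f (last x p) & walk_len s' (f x) q = walk_len s x p]) ->
  (exists p, path (adj w) x p /\ last x p = y) ->
  path_metric w' s' (f x) (f y) <= path_metric w s x y.
Proof.
move=> s'_ge0 lift [p0 [hp0 hl0]]; apply: lb_le_inf.
  by exists (walk_len s x p0), p0.
move=> _ [p [hp <- ->]]; have [q [hq <- <-]] := lift p hp.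
exact: path_metric_le_walk.
Qed.

Section Subdivision.
Variables (R : realType) (V : choiceType) (ori : rel V) (nn : V -> V -> nat).
Variables (w s : V -> V -> R).

Lemma xe0 x y : xe ori nn x y 0 = inl x.
Proof. by rewrite /xe insubF //= /new_pred /= andbF. Qed.

Lemma xe_nn x y : (0 < nn x y)%N -> xe ori nn x y (nn x y) = inl y.
Proof.
move=> hn; rewrite /xe insubF /=; last by rewrite /new_pred /= ltnn !andbF.
by case: eqP hn => // ->.
Qed.

Lemma xe_inner x y k : ori x y -> (0 < k < nn x y)%N ->
  exists h, xe ori nn x y k = inr (exist _ (x, y, k) h).
Proof.
move=> hxy hk; have h : new_pred ori nn (x, y, k) by rewrite /new_pred /= hxy hk.
by exists h; rewrite /xe (insubT (new_pred ori nn) h).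
Qed.

Lemma mlink_xe x y k : ori x y -> x != y -> (2 <= nn x y)%N -> (k < nn x y)%N ->
  mlink (xe ori nn x y k) (xe ori nn x y k.+1) = Some (x, y, k) /\
  mlink (xe ori nn x y k.+1) (xe ori nn x y k) = Some (x, y, k).
Proof.
move=> hxy neq_xy hn; case: k => [|k] hk.
  by have [h ->] := @xe_inner x y 1 hxy hn; rewrite xe0 /mlink /= !eqxx.
have [h ->] := @xe_inner x y k.+1 hxy hk.
have [hk2|] := ltnP k.+2 (nn x y).
  have [h' ->] := @xe_inner x y k.+2 hxy hk2.
  by rewrite /mlink /= !eqxx /= ltn_eqF.
move=> hN; have {}hN : k.+2 = nn x y by apply/eqP; rewrite eqn_leq hk.
rewrite hN xe_nn ?(leq_trans _ hn) // /mlink /= [y == x]eq_sym (negbTE neq_xy).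
by rewrite andbF hN !eqxx.
Qed.

Lemma mlink_ori (a b : mvertex ori nn) x y i : mlink a b = Some (x, y, i) -> ori x y.
Proof.
case: a => [z|[[[x0 y0] i0] h0]]; case: b => [z'|[[[x1 y1] i1] h1]];
  rewrite /mlink /=; repeat case: ifP => //; move=> *;
  match goal with H : Some _ = Some _ |- _ => case: H => *; subst end;
  first [ by case/andP: h0 | by case/andP: h1 |
    match goal with H : is_true (ori _ _ && _) |- _ => by case/andP: H end ].
Qed.

Hypothesis w_sym : forall x y, w x y = w y x.
Hypothesis w_diag : forall x, w x x = 0.
Hypothesis s_sym : forall x y, 0 < w x y -> s x y = s y x.
Hypothesis s_ge0 : forall x y, 0 < w x y -> 0 <= s x y.
Hypothesis ori_E : orientation w ori.
Hypothesis nn_ge2 : forall x y, 0 < w x y -> (2 <= nn x y)%N.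

Let ori_w x y : ori x y -> 0 < w x y. Proof. exact: (ori_E x y).1. Qed.

Let natr_nn_gt0 x y : 0 < w x y -> 0 < (nn x y)%:R :> R.
Proof. by move/nn_ge2; rewrite ltr0n; case: (nn x y). Qed.

Let nn_gt0 x y : ori x y -> (0 < nn x y)%N.
Proof. by move/ori_w/nn_ge2; case: (nn x y). Qed.

Let nn_cancel x y : 0 < w x y -> (nn x y)%:R * (s x y / (nn x y)%:R) = s x y.
Proof. by move/natr_nn_gt0 => hn; rewrite mulrC divfK ?gt_eqF. Qed.

Lemma msigma_ge0 (a b : mvertex ori nn) : 0 <= msigma s a b.
Proof.
rewrite /msigma; case E: (mlink a b) => [[[x y] i]|] //.
by rewrite divr_ge0 ?s_ge0 ?ori_w // (mlink_ori E).
Qed.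

Lemma xe_step x y i : ori x y -> (i < nn x y)%N ->
  (adj (mw w) (xe ori nn x y i) (xe ori nn x y i.+1) /\
   msigma s (xe ori nn x y i) (xe ori nn x y i.+1) = s x y / (nn x y)%:R) /\
  (adj (mw w) (xe ori nn x y i.+1) (xe ori nn x y i) /\
   msigma s (xe ori nn x y i.+1) (xe ori nn x y i) = s x y / (nn x y)%:R).
Proof.
move=> hxy hi; have wxy := ori_w hxy.
have neq_xy : x != y by apply: contraTneq wxy => ->; rewrite w_diag ltxx.
have [e1 e2] := mlink_xe hxy neq_xy (nn_ge2 wxy) hi.
by rewrite /adj /mw /msigma e1 e2 mulr_gt0 ?natr_nn_gt0.
Qed.

Lemma xe_walk_down x y j : ori x y -> (j <= nn x y)%N ->
  exists q, [/\ path (adj (mw w)) (xe ori nn x y j) q, last (xe ori nn x y j) q = inl x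
    & walk_len (msigma s) (xe ori nn x y j) q = j%:R * (s x y / (nn x y)%:R)].
Proof.
move=> hxy hj; rewrite -(xe0 x y).
by apply: chain_walk_down => i hi; apply: (xe_step hxy (leq_trans hi hj)).2.
Qed.

Lemma edge_walk u v : 0 < w u v ->
  exists q, [/\ path (adj (mw w)) (inl u : mvertex ori nn) q, last (inl u) q = inl v
    & walk_len (msigma s) (inl u) q = s u v].
Proof.
move=> wuv; have [ouv | nouv] := boolP (ori u v).
  have [|q] := @chain_walk_up _ _ (msigma s) (adj (mw w)) (s u v / (nn u v)%:R)
    (xe ori nn u v) (nn u v).
    by move=> i hi; exact: (xe_step ouv hi).1.
  by rewrite xe0 xe_nn ?nn_gt0 // nn_cancel //; exists q.
have ovu : ori v u.
  by move: ((ori_E u v).2 wuv); rewrite (negbTE nouv); case: (ori v u).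
have wvu : 0 < w v u by rewrite w_sym.
have [q] := xe_walk_down ovu (leqnn (nn v u)).
by rewrite xe_nn ?nn_gt0 // nn_cancel // -s_sym //; exists q.
Qed.

Lemma walk_lift u p : path (adj w) u p ->
  exists q, [/\ path (adj (mw w)) (inl u : mvertex ori nn) q,
    last (inl u) q = inl (last u p) & walk_len (msigma s) (inl u) q = walk_len s u p].
Proof.
elim: p u => [|v p IH] u /=; first by exists [::]; rewrite !walk_len_nil.
case/andP=> huv hp; have [q1 [hq1 hl1 hlen1]] := edge_walk huv.
have [q2 [hq2 hl2 hlen2]] := IH v hp.
exists (q1 ++ q2); rewrite cat_path last_cat walk_len_cat hl1 hq1 hq2 hl2.
by rewrite hlen1 hlen2 walk_len_cons.
Qed.


Lemma path_metric_inl_le u v : (exists p, path (adj w) u p /\ last u p = v) ->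
  path_metric (mw w) (msigma s) (inl u : mvertex ori nn) (inl v) <= path_metric w s u v.
Proof.
by apply: path_metric_le_lift => [a b _ | p]; [exact: msigma_ge0 | exact: walk_lift].
Qed.

Lemma path_metric_xe_le x y j z : ori x y -> (j <= nn x y)%N ->
  (exists p, path (adj w) x p /\ last x p = z) ->
  path_metric (mw w) (msigma s) (xe ori nn x y j) (inl z) <= s x y + path_metric w s x z.
Proof.
move=> hxy hj conn; have [q [hq hl hlen]] := xe_walk_down hxy hj.
have conn' : exists q', path (adj (mw w)) (last (xe ori nn x y j) q) q' /\
    last (last (xe ori nn x y j) q) q' = inl z.
  have [p [hp <-]] := conn; have [q' [hq' hl' _]] := walk_lift hp.
  by exists q'; rewrite hl.
apply: le_trans (path_metric_le_add (fun a b _ => msigma_ge0 a b) conn' hq) _.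
rewrite hl hlen lerD ?path_metric_inl_le //.
rewrite -[leRHS](nn_cancel (ori_w hxy)) ler_wpM2r ?ler_nat //.
by rewrite divr_ge0 ?s_ge0 ?ori_w ?ler0n.
Qed.

End Subdivision.

Lemma half_le_ln2 (R : realType) : 1 / 2 <= ln (2 : R).
Proof.
have := @le_ln1Dx R (- (1 / 2)) ltac:(lra).
have -> : 1 + - (1 / 2) = (2 : R)^-1 by field.
by rewrite lnV ?posrE //; lra.
Qed.

Lemma ln_Rn_ge1 (R : realType) n : 1 <= ln (Rn R n).
Proof.
rewrite /Rn lnXn // -[_ *+ _]mulr_natr.
have : 4 <= (n + 4)%:R :> R by rewrite ler_nat leq_addl.
have := half_le_ln2 R; nra.
Qed.

Section Threshold.
Variables (R : realType) (V : choiceType) (w s : V -> V -> R) (mu : V -> R) (xbar : V).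
Hypothesis s_ge0 : forall a b, adj w a b -> 0 <= s a b.
Hypothesis mu_gt0 : forall x, 0 < mu x.
Hypothesis Cinf_gt0 : 0 < Cinf mu.

Lemma fball_ge0 r : 0 <= r -> (ball_measure w s mu xbar r < +oo)%E ->
  0 <= fball w s mu xbar r.
Proof.
move=> r_ge0 ball_fin.
have xbar_in : ((mu xbar)%:E <= ball_measure w s mu xbar r)%E.
  apply: esum_ge; exists [set xbar]; last by rewrite fsbig_set1.
  split=> [|_ ->]; first exact: finite_set1.
  by rewrite /= (le_trans (path_metric_le_walk s_ge0 (erefl : path _ xbar [::])))
    // walk_len_nil.
have mu_le : mu xbar <= fine (ball_measure w s mu xbar r).
  by move: xbar_in ball_fin; case: (ball_measure _ _ _ _ _).
have C_le : Cinf mu <= mu xbar.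
  by apply: ge_inf; [exists 0 => _ [z _ <-]; exact: ltW | exists xbar].
rewrite /fball subr_ge0 ler_ln ?posrE ?(le_trans C_le) //.
exact: lt_le_trans (mu_gt0 xbar) mu_le.
Qed.

Lemma thr_gt0 n : (ball_measure w s mu xbar (Rn R n) < +oo)%E -> 0 < thr w s mu xbar n.
Proof.
move=> ball_fin; have := fball_ge0 (exprn_ge0 _ (ler0n R 2)) ball_fin.
have := ln_ge0 (ln_Rn_ge1 R n); rewrite /thr; lra.
Qed.

End Threshold.

Theorem lemma4p1 (R : realType) (V : countType) (w : V -> V -> R) (mu : V -> R)
    (s : V -> V -> R) (xbar : V) (ori : rel V) (nn : V -> V -> nat) :
  simple_weighted_graph w mu ->
  adapted_weight w mu s ->
  0 < Cinf mu ->
  (forall r : R, (ball_measure w s mu xbar r < +oo)%E) ->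
  orientation w ori ->
  (forall x y, 0 < w x y -> nn x y = nn y x) ->
  (forall x y, 0 < w x y -> (2 <= nn x y)%N) ->
  (forall (n : nat) (x y : V), 0 < w x y ->
     2 ^+ (n + 2) - 1 <= Num.max (path_metric w s x xbar) (path_metric w s y xbar) ->
     thr w s mu xbar n <= (nn x y)%:R) ->
  forall (n : nat) (x y : V) (k : nat),
    ori x y -> (k <= nn x y - 1)%N ->
    2 ^+ (n + 2) <=
      Num.max (path_metric (mw w) (msigma s) (xe ori nn x y k) (inl xbar))
              (path_metric (mw w) (msigma s) (xe ori nn x y k.+1) (inl xbar)) ->
    msigma s (xe ori nn x y k) (xe ori nn x y k.+1) <= sigma_n w s mu xbar n.
Proof.
move=> [_ [w_sym [_ [w_diag [mu_gt0 [_ conn]]]]]] [s_sym [s_range _]] C_gt0 ball_fin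
  ori_E _ nn_ge2 nn_thr n x y k oxy hk far.
have s_ge0 a b : 0 < w a b -> 0 <= s a b by case/s_range/andP=> /ltW.
have wxy := (ori_E x y).1 oxy; have /andP[_ s_le1] := s_range _ _ wxy.
have kN : (k < nn x y)%N.
  by rewrite (leq_ltn_trans hk) // ltn_subrL (leq_trans _ (nn_ge2 _ _ wxy)).
have far_x : 2 ^+ (n + 2) - 1 <= path_metric w s x xbar.
  have near j : (j <= nn x y)%N ->
      path_metric (mw w) (msigma s) (xe ori nn x y j) (inl xbar) <=
      1 + path_metric w s x xbar.
    move=> hj; apply: le_trans (_ : _ <= s x y + path_metric w s x xbar) _.
      exact (path_metric_xe_le w_sym w_diag s_sym s_ge0 ori_E nn_ge2
               oxy hj (conn x xbar)).
    by rewrite lerD2r.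
  by rewrite lerBlDl (le_trans far) // ge_max !near // ltnW.
have thr_le : thr w s mu xbar n <= (nn x y)%:R.
  by apply: nn_thr wxy _; rewrite le_max far_x.
have thr_pos := thr_gt0 s_ge0 mu_gt0 C_gt0 (ball_fin (Rn R n)).
have [[_ ->] _] := xe_step s w_diag ori_E nn_ge2 oxy kN.
apply: (@le_trans _ _ (1 / (nn x y)%:R)); first by rewrite ler_wpM2r ?invr_ge0.
by rewrite /sigma_n !div1r lef_pV2 ?posrE // (lt_le_trans thr_pos).
Qed.
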